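(* Assume the setting below (assumptions A1–A3, any step size $\alpha>0$). For every integer $k\ge 0$ let $$\Delta_k=\frac{L(\tau+1)}{2}\sum_{j=k-\tau}^{k}\|x_{j+1}-x_j\|^2 .$$ Then for every $k\ge 0$ and every $x\in\mathbb{R}^d$, $$\Phi(x_{k+1})\le \Phi(x)+\frac{1}{2\alpha}\|x-x_k\|^2-\frac{1}{2\alpha}\|x-x_{k+1}\|^2-\frac{1}{2\alpha}\|x_{k+1}-x_k\|^2+\Delta_k .$$
   Context: Problem: minimize $\Phi(x)=F(x)+h(x)$ over $x\in\mathbb{R}^d$, where $F(x)=\sum_{n=1}^N f_n(x)$. Assumption A1: each $f_n:\mathbb{R}^d\to\mathbb{R}$ is convex and differentiable with $\|\nabla f_n(x)-\nabla f_n(y)\|\le L_n\|x-y\|$ for all $x,y$; set $L=\sum_{n=1}^N L_n$. Assumption A2: $h:\mathbb{R}^d\to(-\infty,\infty]$ is proper, closed, convex, and $\partial h(x)\neq\emptyset$ for all $x$ in its effective domain. Assumption A3: the delays $\tau_k^n$ ($k\ge0$, $n=1,\dots,N$) are integers with $\tau_k^n\in\{0,1,\dots,\tau\}$ for a fixed nonnegative integer $\tau$ (the delay parameter). PIAG method: given $x_0\in\mathbb{R}^d$ and step size $\alpha>0$, with the convention $x_j=x_0$ for $j<0$, for $k\ge0$ set $g_k=\sum_{n=1}^N\nabla f_n(x_{k-\tau_k^n})$ and $$x_{k+1}=\arg\min_{x\in\mathbb{R}^d}\Big\{h(x)+\langle g_k,x-x_k\rangle+\frac{1}{2\alpha}\|x-x_k\|^2\Big\}.$$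 In particular $\|x_{j+1}-x_j\|=0$ for $j<0$. *)

From Stdlib Require Import Reals ZArith.
From mathcomp Require Import ssreflect ssrfun ssrbool eqtype ssrnat fintype bigop.

Set Implicit Arguments.
Unset Strict Implicit.
Unset Printing Implicit Defensive.

Local Open Scope R_scope.

Definition vec (d : nat) := 'I_d -> R.

Definition vzero {d} : vec d := fun _ => 0.
Definition vadd {d} (x y : vec d) : vec d := fun i => x i + y i.
Definition vsub {d} (x y : vec d) : vec d := fun i => x i - y i.
Definition vscale {d} (a : R) (x : vec d) : vec d := fun i => a * x i.

Definition inner {d} (x y : vec d) : R := \big[Rplus/0]_(i < d) (x i * y i).
Definition norm {d} (x : vec d) : R := sqrt (inner x x).

Inductive ereal := Fin (r : R) | PInf.

Definition ele (a b : ereal) : Prop :=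
  match a, b with
  | _, PInf => True
  | PInf, Fin _ => False
  | Fin x, Fin y => x <= y
  end.

Definition elt (a b : ereal) : Prop :=
  match a, b with
  | Fin x, PInf => True
  | PInf, _ => False
  | Fin x, Fin y => x < y
  end.

Definition eplus (a b : ereal) : ereal :=
  match a, b with
  | Fin x, Fin y => Fin (x + y)
  | _, _ => PInf
  end.

Definition convex_fun {d} (f : vec d -> R) : Prop :=
  forall (x y : vec d) (t : R), 0 <= t <= 1 ->
    f (vadd (vscale t x) (vscale (1 - t) y)) <= t * f x + (1 - t) * f y.

Definition has_gradient {d} (f : vec d -> R) (x g : vec d) : Prop :=
  forall eps, 0 < eps -> exists delta, 0 < delta /\
    forall y, norm (vsub y x) < delta ->
      Rabs (f y - f x - inner g (vsub y x)) <= eps * norm (vsub y x).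

Definition proper_fun {d} (h : vec d -> ereal) : Prop :=
  exists x, h x <> PInf.

Definition convex_efun {d} (h : vec d -> ereal) : Prop :=
  forall (x y : vec d) (a b t : R), h x = Fin a -> h y = Fin b -> 0 <= t <= 1 ->
    ele (h (vadd (vscale t x) (vscale (1 - t) y))) (Fin (t * a + (1 - t) * b)).

(* closed = lower semicontinuous everywhere *)
Definition closed_fun {d} (h : vec d -> ereal) : Prop :=
  forall (x : vec d) (c : R), elt (Fin c) (h x) ->
    exists delta, 0 < delta /\
      forall y, norm (vsub y x) < delta -> elt (Fin c) (h y).

Definition subdiff_nonempty {d} (h : vec d -> ereal) : Prop :=
  forall (x : vec d) (a : R), h x = Fin a ->
    exists g : vec d, forall y, ele (Fin (a + inner g (vsub y x))) (h y).

Definition Fsum {d N} (f : 'I_N -> vec d -> R) (x : vec d) : R :=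
  \big[Rplus/0]_(n < N) f n x.

Definition Phi {d N} (f : 'I_N -> vec d -> R) (h : vec d -> ereal) (x : vec d)
  : ereal := eplus (Fin (Fsum f x)) (h x).

(* PIAG aggregated delayed gradient g_k (x_j = x_0 for j < 0 is automatic
   since nat subtraction truncates at 0) *)
Definition piag_grad {d N} (gradf : 'I_N -> vec d -> vec d)
  (tau_k : nat -> 'I_N -> nat) (x : nat -> vec d) (k : nat) : vec d :=
  \big[vadd/vzero]_(n < N) gradf n (x (k - tau_k k n)%N).

Definition piag_step {d N} (h : vec d -> ereal) (gradf : 'I_N -> vec d -> vec d)
  (tau_k : nat -> 'I_N -> nat) (alpha : R) (x : nat -> vec d) : Prop :=
  forall (k : nat) (z : vec d),
    ele (eplus (h (x k.+1))
          (Fin (inner (piag_grad gradf tau_k x k) (vsub (x k.+1) (x k))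
                + / (2 * alpha) * norm (vsub (x k.+1) (x k)) ^ 2)))
        (eplus (h z)
          (Fin (inner (piag_grad gradf tau_k x k) (vsub z (x k))
                + / (2 * alpha) * norm (vsub z (x k)) ^ 2))).

Definition xZ {d} (x : nat -> vec d) (j : Z) : vec d :=
  if (j <? 0)%Z then x 0%N else x (Z.to_nat j).

(* Delta_k = L(tau+1)/2 * sum_{j=k-tau}^{k} ||x_{j+1}-x_j||^2 ;
   the sum is written with i = k - j ranging over 0..tau *)
Definition piag_Delta {d} (L : R) (tau : nat) (x : nat -> vec d) (k : nat) : R :=
  L * (INR tau + 1) / 2 *
  sum_f_R0 (fun i => norm (vsub (xZ x (Z.of_nat k - Z.of_nat i + 1))
                                 (xZ x (Z.of_nat k - Z.of_nat i))) ^ 2) tau.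

(* Three inequalities are added up. Optimality of x_{k+1} in the convex prox
   subproblem, tested along the segment towards x, gives
   h(x_{k+1}) <= h(x) + <g_k, x - x_{k+1}> + (1/alpha) <x_{k+1} - x_k, x - x_{k+1}>.
   For each component, the descent lemma at the delayed point z = x_{k - tau_k^n}
   followed by the gradient inequality from z towards x gives
   f_n(x_{k+1}) <= f_n(x) + <grad f_n(z), x_{k+1} - x> + L_n/2 ||x_{k+1} - z||^2,
   and ||x_{k+1} - z||^2 <= (tau+1) sum_{j=k-tau}^{k} ||x_{j+1} - x_j||^2 since
   x_{k+1} - z telescopes into at most tau+1 steps.  Summing over n, the delayed
   gradients add up to g_k and cancel against the prox inequality, and the
   three-point identity turns the remaining inner product into the three
   squared distances. *)

From Stdlib Require Import Reals ZArith Lra Lia FunctionalExtensionality.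
From mathcomp Require Import ssreflect ssrfun ssrbool eqtype ssrnat seq fintype bigop.
From HB Require Import structures.
From mathcomp Require Import zify.

Local Open Scope R_scope.

HB.instance Definition _ := Monoid.isComLaw.Build R 0 Rplus
  (fun a b c => esym (Rplus_assoc a b c)) Rplus_comm Rplus_0_l.

Lemma big_Rle (I : Type) (r : seq I) (F G : I -> R) :
  (forall i, F i <= G i) -> \big[Rplus/0]_(i <- r) F i <= \big[Rplus/0]_(i <- r) G i.
Proof.
move=> FG; apply: (big_ind2 (fun a b => a <= b)) => [|a b c e|i _]; [lra | lra | exact: FG].
Qed.

Lemma big_Rmult_l (I : Type) (r : seq I) (F : I -> R) c :
  c * \big[Rplus/0]_(i <- r) F i = \big[Rplus/0]_(i <- r) (c * F i).
Proof. exact: (big_morph _ (Rmult_plus_distr_l c) (Rmult_0_r c)). Qed.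

Lemma le_of_forall_le_add_mul (A B C : R) :
  (forall t, 0 < t <= 1 -> A <= B + t * C) -> A <= B.
Proof.
move=> le_t; case: (Rle_lt_dec A B) => // BA; exfalso.
set t := Rmin 1 ((A - B) / (2 * (Rabs C + 1))).
have C0 := Rabs_pos C; have CC := Rle_abs C.
have t_pos : 0 < t by apply: Rmin_pos; [lra | apply: Rdiv_lt_0_compat; lra].
have t_small : t * (2 * (Rabs C + 1)) <= A - B.
  have := Rmin_r 1 ((A - B) / (2 * (Rabs C + 1))); rewrite -/t => tle.
  have E : (A - B) / (2 * (Rabs C + 1)) * (2 * (Rabs C + 1)) = A - B by field; lra.
  nra.
have := le_t t (conj t_pos (Rmin_l _ _)); nra.
Qed.

Lemma sum_f_R0_le_mono (F : nat -> R) m n : (forall i, 0 <= F i) -> (m <= n)%N ->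
  sum_f_R0 F m <= sum_f_R0 F n.
Proof.
move=> F0 /subnKC <-; elim: (n - m)%N => [|p IH]; first by rewrite addn0; lra.
by rewrite addnS /=; have := F0 (m + p).+1; lra.
Qed.

Section Euclidean.

Context {d : nat}.
Implicit Types u v w : vec d.

Lemma vec_ext u v : (forall i, u i = v i) -> u = v.
Proof. by move=> uv; apply: functional_extensionality. Qed.

Lemma inner_comm u v : inner u v = inner v u.
Proof. by apply: eq_bigr => i _; rewrite Rmult_comm. Qed.

Lemma inner_addl u v w : inner (vadd u v) w = inner u w + inner v w.
Proof. by rewrite /inner -big_split; apply: eq_bigr => i _; rewrite /vadd /=; ring. Qed.

Lemma inner_addr u v w : inner w (vadd u v) = inner w u + inner w v.
Proof. by rewrite inner_comm inner_addl !(inner_comm w). Qed.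

Lemma inner_scalel a u v : inner (vscale a u) v = a * inner u v.
Proof. by rewrite /inner big_Rmult_l; apply: eq_bigr => i _; rewrite /vscale; ring. Qed.

Lemma inner_scaler a u v : inner v (vscale a u) = a * inner v u.
Proof. by rewrite inner_comm inner_scalel inner_comm. Qed.

Lemma inner_subr u v w : inner w (vsub u v) = inner w u - inner w v.
Proof.
have -> : vsub u v = vadd u (vscale (-1) v) by apply: vec_ext => i; rewrite /vsub /vadd /vscale; ring.
by rewrite inner_addr inner_scaler; ring.
Qed.

Lemma inner_subl u v w : inner (vsub u v) w = inner u w - inner v w.
Proof. by rewrite inner_comm inner_subr !(inner_comm w). Qed.

Lemma inner0l u : inner vzero u = 0.
Proof. by rewrite /inner big1 // => i _; rewrite /vzero Rmult_0_l. Qed.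

Lemma inner_ge0 u : 0 <= inner u u.
Proof.
apply: (big_ind (fun s => 0 <= s)) => [|a b|i _]; [lra | lra | nra].
Qed.

Lemma norm_ge0 u : 0 <= norm u.
Proof. exact: sqrt_pos. Qed.

Lemma norm_sq u : norm u ^ 2 = inner u u.
Proof. exact/pow2_sqrt/inner_ge0. Qed.

Lemma inner_add_sq u v : inner (vadd u v) (vadd u v) = inner u u + 2 * inner u v + inner v v.
Proof. by rewrite !inner_addl !inner_addr (inner_comm v u); ring. Qed.

Lemma norm_scale a u : norm (vscale a u) = Rabs a * norm u.
Proof.
rewrite /norm inner_scalel inner_scaler -Rmult_assoc sqrt_mult; [|nra|exact: inner_ge0].
by rewrite -/(Rsqr a) sqrt_Rsqr_abs.
Qed.

Lemma inner_le_young u v s : 0 < s -> 2 * inner u v <= s * inner u u + / s * inner v v.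
Proof.
move=> s0; rewrite /inner !big_Rmult_l -big_split /=; apply: big_Rle => i.
have : 0 <= (s * u i - v i) ^ 2 * / s by apply: Rmult_le_pos; [exact: pow2_ge_0 | exact: Rlt_le (Rinv_0_lt_compat _ s0)].
have -> : (s * u i - v i) ^ 2 * / s = s * (u i * u i) + / s * (v i * v i) - 2 * (u i * v i)
  by field; lra.
lra.
Qed.

Lemma inner_add_sq_le u v s : 0 < s ->
  inner (vadd u v) (vadd u v) <= (1 + s) * inner u u + (1 + / s) * inner v v.
Proof. by move=> s0; rewrite inner_add_sq; have := inner_le_young u v s s0; lra. Qed.

Lemma inner_le_norm_mul u v : inner u v <= norm u * norm v.
Proof.
have norm0 : forall a b : vec d, norm a = 0 -> inner a b <= 0.
  move=> a b a0; apply: (@le_of_forall_le_add_mul _ _ (inner b b / 2)) => t [t0 _].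
  have := inner_le_young a b _ (Rinv_0_lt_compat _ t0).
  rewrite -norm_sq a0 Rinv_inv; lra.
case: (Req_dec (norm u) 0) => [u0|u0]; first by rewrite u0 Rmult_0_l; apply: norm0.
case: (Req_dec (norm v) 0) => [v0|v0]; first by rewrite v0 Rmult_0_r inner_comm; apply: norm0.
have := norm_ge0 u; have := norm_ge0 v; move=> v_ge0 u_ge0.
have := inner_le_young u v _ (Rdiv_lt_0_compat (norm v) (norm u) ltac:(lra) ltac:(lra)).
rewrite -!norm_sq.
have -> : norm v / norm u * norm u ^ 2 + / (norm v / norm u) * norm v ^ 2 = 2 * (norm u * norm v)
  by field; lra.
lra.
Qed.

Lemma norm_sq_three_point u v w :
  norm (vsub w u) ^ 2 - norm (vsub w v) ^ 2 - norm (vsub v u) ^ 2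
  = 2 * inner (vsub v u) (vsub w v).
Proof.
have -> : vsub w u = vadd (vsub v u) (vsub w v) by apply: vec_ext => i; rewrite /vadd /vsub; ring.
by rewrite !norm_sq inner_add_sq; ring.
Qed.

Lemma sq_dist_le_path (p : nat -> vec d) m :
  norm (vsub (p 0%N) (p m.+1)) ^ 2
  <= (INR m + 1) * sum_f_R0 (fun i => norm (vsub (p i) (p i.+1)) ^ 2) m.
Proof.
elim: m => [|m IH]; first by rewrite /=; lra.
change (sum_f_R0 ?F m.+1) with (sum_f_R0 F m + F m.+1).
set S := sum_f_R0 _ m in IH *.
have -> : vsub (p 0%N) (p m.+2) = vadd (vsub (p 0%N) (p m.+1)) (vsub (p m.+1) (p m.+2))
  by apply: vec_ext => i; rewrite /vadd /vsub; ring.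
have m0 : 0 < INR m + 1 by have := pos_INR m; lra.
rewrite norm_sq; apply: Rle_trans (inner_add_sq_le _ _ _ (Rinv_0_lt_compat _ m0)) _.
rewrite Rinv_inv -!norm_sq S_INR.
have : (1 + / (INR m + 1)) * norm (vsub (p 0%N) (p m.+1)) ^ 2
       <= (1 + / (INR m + 1)) * ((INR m + 1) * S).
  by apply: Rmult_le_compat_l => //; have := Rinv_0_lt_compat _ m0; lra.
have -> : (1 + / (INR m + 1)) * ((INR m + 1) * S) = (INR m + 1 + 1) * S by field; lra.
lra.
Qed.

End Euclidean.

Section Smooth.

Context {d : nat}.
Implicit Types x y z v g : vec d.
Implicit Type f : vec d -> R.

Definition line x v (t : R) : vec d := vadd x (vscale t v).

Lemma line0 x v : line x v 0 = x.
Proof. by apply: vec_ext => i; rewrite /line /vadd /vscale; ring. Qed.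

Lemma line1 x y : line x (vsub y x) 1 = y.
Proof. by apply: vec_ext => i; rewrite /line /vadd /vscale /vsub; ring. Qed.

Lemma derivable_pt_lim_line f x v g t :
  has_gradient f (line x v t) g ->
  derivable_pt_lim (fun s => f (line x v s)) t (inner g v).
Proof.
move=> grad eps eps0.
have := norm_ge0 v; set nv := norm v => nv0.
set eps' := eps / (2 * (nv + 1)).
have eps'0 : 0 < eps' by apply: Rdiv_lt_0_compat; lra.
have eps'_nv : eps' * nv < eps.
  have E : eps' * (2 * (nv + 1)) = eps by rewrite /eps'; field; lra.
  nra.
have [delta [delta0 near]] := grad eps' eps'0.
have delta'0 : 0 < delta / (nv + 1) by apply: Rdiv_lt_0_compat; lra.
exists (mkposreal _ delta'0) => s s0 /= sd.
have step : vsub (line x v (t + s)) (line x v t) = vscale s v.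
  by apply: vec_ext => i; rewrite /line /vsub /vadd /vscale; ring.
have s_pos : 0 < Rabs s by apply: Rabs_pos_lt.
have close : norm (vsub (line x v (t + s)) (line x v t)) < delta.
  rewrite step norm_scale -/nv.
  have E : delta / (nv + 1) * (nv + 1) = delta by field; lra.
  nra.
have := near _ close; rewrite step inner_scaler norm_scale -/nv.
set a := f (line x v (t + s)) - f (line x v t) - s * inner g v => a_le.
have -> : (f (line x v (t + s)) - f (line x v t)) / s - inner g v = a * / s
  by rewrite /a; field.
rewrite Rabs_mult Rabs_inv; apply: Rle_lt_trans eps'_nv.
have <- : eps' * (Rabs s * nv) * / Rabs s = eps' * nv by field; lra.
by apply: Rmult_le_compat_r => //; apply/Rlt_le/Rinv_0_lt_compat.
Qed.

Lemma derivative_le_secant (phi : R -> R) l :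
  derivable_pt_lim phi 0 l ->
  (forall t, 0 < t <= 1 -> phi t <= (1 - t) * phi 0 + t * phi 1) ->
  l <= phi 1 - phi 0.
Proof.
move=> dphi cvx; apply: (@le_of_forall_le_add_mul _ _ 1) => eps [eps0 _].
have [delta near] := dphi eps eps0; have delta0 := cond_pos delta.
set s := Rmin 1 (delta / 2).
have s0 : 0 < s by apply: Rmin_pos; lra.
have s_delta : Rabs s < delta.
  by rewrite Rabs_pos_eq; [have := Rmin_r 1 (delta / 2); rewrite -/s; lra | lra].
have := near s (Rgt_not_eq _ _ s0) s_delta; rewrite Rplus_0_l.
set q := (phi s - phi 0) / s => /Rabs_def2 [_ q_l].
have qs : q * s = phi s - phi 0 by rewrite /q; field; lra.
have := cvx s (conj s0 (Rmin_l _ _)); nra.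
Qed.

Lemma gradient_inequality f g x y :
  convex_fun f -> has_gradient f x g -> f x + inner g (vsub y x) <= f y.
Proof.
move=> cvx grad; set v := vsub y x.
suff : inner g v <= f (line x v 1) - f (line x v 0) by rewrite line0 line1; lra.
apply: (@derivative_le_secant (fun s => f (line x v s))).
  by apply: derivable_pt_lim_line; rewrite line0.
move=> t [t0 t1]; rewrite line0 line1.
have -> : line x v t = vadd (vscale t y) (vscale (1 - t) x).
  by apply: vec_ext => i; rewrite /line /v /vadd /vscale /vsub; ring.
by have := cvx y x t (conj (Rlt_le _ _ t0) t1); lra.
Qed.

Lemma derivable_pt_lim_quadratic c1 c2 t :
  derivable_pt_lim (fun s => s * c1 + c2 * (s * s)) t (c1 + c2 * (2 * t)).
Proof.
have lin := derivable_pt_lim_mult id (fct_cte c1) t 1 0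
  (derivable_pt_lim_id t) (derivable_pt_lim_const c1 t).
have sq := derivable_pt_lim_mult id id t 1 1 (derivable_pt_lim_id t) (derivable_pt_lim_id t).
have := derivable_pt_lim_plus _ _ t _ _ lin
  (derivable_pt_lim_mult (fct_cte c2) _ t 0 _ (derivable_pt_lim_const c2 t) sq).
rewrite /plus_fct /mult_fct /fct_cte /id.
by have -> : c1 + c2 * (2 * t) = 1 * c1 + t * 0 + (0 * (t * t) + c2 * (1 * t + t * 1)) by ring.
Qed.

Lemma descent_lemma f (gf : vec d -> vec d) (c : R) x y :
  (forall p, has_gradient f p (gf p)) ->
  (forall p q, norm (vsub (gf p) (gf q)) <= c * norm (vsub p q)) ->
  f y <= f x + inner (gf x) (vsub y x) + c / 2 * norm (vsub y x) ^ 2.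
Proof.
move=> grad lip; set v := vsub y x.
set c1 := inner (gf x) v; set c2 := c / 2 * norm v ^ 2.
set psi := fun s => f (line x v s) - (s * c1 + c2 * (s * s)).
have dpsi : forall s, derivable_pt_lim psi s (inner (gf (line x v s)) v - (c1 + c2 * (2 * s))).
  move=> s; apply: derivable_pt_lim_minus; last exact: derivable_pt_lim_quadratic.
  exact: derivable_pt_lim_line.
have [s [mvt [s0 s1]]] := MVT_cor1 psi 0 1 (fun s => exist _ _ (dpsi s)) Rlt_0_1.
rewrite (derive_pt_eq_0 _ _ _ _ (dpsi s)) /psi line0 line1 in mvt.
(* the Lipschitz bound at [line x v s] exactly cancels the quadratic correction *)
have gap : inner (gf (line x v s)) v - c1 <= c * s * (norm v * norm v).
  rewrite /c1 -inner_subl; apply: Rle_trans (inner_le_norm_mul _ _) _.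
  have := lip (line x v s) x.
  have -> : vsub (line x v s) x = vscale s v.
    by apply: vec_ext => i; rewrite /line /vadd /vscale /vsub; ring.
  rewrite norm_scale Rabs_pos_eq; last lra.
  have := norm_ge0 v; nra.
have : c2 * (2 * s) = c * s * (norm v * norm v) by rewrite /c2; field.
rewrite -/v -/c1 -/c2; nra.
Qed.

Lemma descent_at_delayed_point f (gf : vec d -> vec d) (c : R) z x y :
  convex_fun f -> (forall p, has_gradient f p (gf p)) ->
  (forall p q, norm (vsub (gf p) (gf q)) <= c * norm (vsub p q)) ->
  f x <= f y + inner (gf z) (vsub x y) + c / 2 * norm (vsub x z) ^ 2.
Proof.
move=> cvx grad lip.
have := descent_lemma _ _ _ z x grad lip.
have := gradient_inequality _ _ _ y cvx (grad z).
have -> : vsub x z = vadd (vsub x y) (vsub y z) by apply: vec_ext => i; rewrite /vadd /vsub; ring.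
rewrite inner_addr; lra.
Qed.

Lemma lipschitz_neg_norm0 (G : vec d -> vec d) (c : R) :
  c < 0 -> (forall p q, norm (vsub (G p) (G q)) <= c * norm (vsub p q)) ->
  forall v, norm v = 0.
Proof.
move=> c0 lip v; have := lip v vzero.
have -> : vsub v vzero = v by apply: vec_ext => i; rewrite /vsub /vzero; ring.
have := norm_ge0 v; have := norm_ge0 (vsub (G v) (G vzero)); nra.
Qed.

End Smooth.

Lemma prox_three_point {d} (h : vec d -> ereal) (g xk x1 y : vec d) (kap a b : R) :
  convex_efun h -> h x1 = Fin a -> h y = Fin b ->
  (forall z, ele (eplus (h x1) (Fin (inner g (vsub x1 xk) + kap * norm (vsub x1 xk) ^ 2)))
                 (eplus (h z) (Fin (inner g (vsub z xk) + kap * norm (vsub z xk) ^ 2)))) ->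
  a <= b + inner g (vsub y x1) + 2 * kap * inner (vsub x1 xk) (vsub y x1).
Proof.
move=> cvx hx1 hy opt; set e := vsub x1 xk; set w := vsub y x1.
(* compare x1 with the points of the segment towards y and let them tend to x1 *)
apply: (@le_of_forall_le_add_mul _ _ (kap * inner w w)) => t [t0 t1].
set zt := vadd (vscale t y) (vscale (1 - t) x1).
have := cvx y x1 b a t hy hx1 (conj (Rlt_le _ _ t0) t1); rewrite -/zt.
case hz: (h zt) => [c|] //= hc.
have := opt zt; rewrite hx1 hz; cbn [ele eplus].
have -> : vsub zt xk = vadd e (vscale t w).
  by apply: vec_ext => i; rewrite /zt /e /w /vsub /vadd /vscale; ring.
rewrite -/e !norm_sq inner_add_sq inner_addr !inner_scaler inner_scalel => opt_t.
apply: (Rmult_le_reg_l t) => //; lra.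
Qed.

Section PIAG.

Context {d : nat}.
Variable x : nat -> vec d.

Lemma xZ_sub k m : xZ x (Z.of_nat k - Z.of_nat m) = x (k - m)%N.
Proof.
rewrite /xZ; case: (Z.ltb_spec (Z.of_nat k - Z.of_nat m) 0) => km.
  by have -> : (k - m)%N = 0%N by lia.
by f_equal; lia.
Qed.

Lemma piag_DeltaD a b tau k :
  piag_Delta (a + b) tau x k = piag_Delta a tau x k + piag_Delta b tau x k.
Proof. by rewrite /piag_Delta; field. Qed.

Lemma piag_Delta0 tau k : piag_Delta 0 tau x k = 0.
Proof. by rewrite /piag_Delta; field. Qed.

Lemma sq_dist_delayed_le_Delta c tau k t : 0 <= c -> (t <= tau)%N ->
  c / 2 * norm (vsub (x k.+1) (x (k - t)%N)) ^ 2 <= piag_Delta c tau x k.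
Proof.
(* p i = x_{k+1-i} (with x_j = x_0 for j < 0), whose steps are the summands of Delta_k *)
move=> c0 t_tau; set p := fun i => xZ x (Z.of_nat k.+1 - Z.of_nat i).
set F := fun i => norm (vsub (p i) (p i.+1)) ^ 2.
have -> : piag_Delta c tau x k = c / 2 * ((INR tau + 1) * sum_f_R0 F tau).
  rewrite /piag_Delta; have -> // : (fun i => norm (vsub (xZ x (Z.of_nat k - Z.of_nat i + 1))
                                     (xZ x (Z.of_nat k - Z.of_nat i))) ^ 2) = F.
    by apply: functional_extensionality => i; congr (norm (vsub (xZ x _) (xZ x _)) ^ 2); lia.
  by field.
have path := sq_dist_le_path p t; rewrite /p !xZ_sub subn0 subSS -/p -/F in path.
have F0 : forall i, 0 <= F i by move=> i; apply: pow2_ge_0.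
have := sum_f_R0_le_mono _ _ _ F0 t_tau; have := cond_pos_sum F t F0.
have := le_INR _ _ (elimT leP t_tau); have := pos_INR t.
move=> *; apply: Rmult_le_compat_l; first lra.
apply: Rle_trans path _; apply: Rmult_le_compat; lra.
Qed.

Lemma delayed_component_bound (f : vec d -> R) (gf : vec d -> vec d) c tau k t y :
  convex_fun f -> (forall p, has_gradient f p (gf p)) ->
  (forall p q, norm (vsub (gf p) (gf q)) <= c * norm (vsub p q)) -> (t <= tau)%N ->
  f (x k.+1) <= f y + inner (gf (x (k - t)%N)) (vsub (x k.+1) y) + piag_Delta c tau x k.
Proof.
move=> cvx grad lip t_tau.
have := descent_at_delayed_point _ _ _ (x (k - t)%N) (x k.+1) y cvx grad lip.
case: (Rle_lt_dec 0 c) => [c0|c0].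
  by have := sq_dist_delayed_le_Delta _ _ k _ c0 t_tau; lra.
(* A negative Lipschitz constant can only occur when every vector has norm 0. *)
have norm0 := lipschitz_neg_norm0 _ _ c0 lip.
have -> : piag_Delta c tau x k = 0.
  by rewrite /piag_Delta sum_eq_R0 => [|i _]; [ring | rewrite norm0; ring].
rewrite norm0; lra.
Qed.

Lemma Fsum_piag_bound {N} (f : 'I_N -> vec d -> R) gradf Ln tau tau_k k y :
  (forall n, convex_fun (f n)) -> (forall n p, has_gradient (f n) p (gradf n p)) ->
  (forall n p q, norm (vsub (gradf n p) (gradf n q)) <= Ln n * norm (vsub p q)) ->
  (forall k n, (tau_k k n <= tau)%N) ->
  Fsum f (x k.+1) <= Fsum f y + inner (piag_grad gradf tau_k x k) (vsub (x k.+1) y)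
                     + piag_Delta (\big[Rplus/0]_(n < N) Ln n) tau x k.
Proof.
move=> cvx grad lip delay; rewrite /Fsum /piag_grad.
rewrite (big_morph (fun v => inner v _) (op1 := Rplus) (fun u v => inner_addl u v _) (inner0l _)).
rewrite (big_morph (fun c => piag_Delta c tau x k) (op1 := Rplus)
  (fun a b => piag_DeltaD a b tau k) (piag_Delta0 tau k)).
by rewrite -!big_split; apply: big_Rle => n; apply: delayed_component_bound.
Qed.

End PIAG.

Theorem lemma2 (d N : nat) (f : 'I_N -> vec d -> R) (gradf : 'I_N -> vec d -> vec d)
  (Ln : 'I_N -> R) (h : vec d -> ereal) (tau : nat) (tau_k : nat -> 'I_N -> nat)
  (alpha : R) (x : nat -> vec d)
  (* A1 *)
  (Hconv : forall n, convex_fun (f n))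
  (Hgrad : forall n y, has_gradient (f n) y (gradf n y))
  (Hlip : forall n y z, norm (vsub (gradf n y) (gradf n z)) <= Ln n * norm (vsub y z))
  (* A2 *)
  (Hproper : proper_fun h) (Hclosed : closed_fun h) (Hhconv : convex_efun h)
  (Hsub : subdiff_nonempty h)
  (* A3 *)
  (Htau : forall k n, (tau_k k n <= tau)%N)
  (* PIAG *)
  (Halpha : 0 < alpha)
  (Hstep : piag_step h gradf tau_k alpha x) :
  let L := \big[Rplus/0]_(n < N) Ln n in
  forall (k : nat) (y : vec d),
    ele (Phi f h (x k.+1))
        (eplus (Phi f h y)
           (Fin (/ (2 * alpha) * norm (vsub y (x k)) ^ 2
                 - / (2 * alpha) * norm (vsub y (x k.+1)) ^ 2
                 - / (2 * alpha) * norm (vsub (x k.+1) (x k)) ^ 2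
                 + piag_Delta L tau x k))).
Proof.
move=> L k y; rewrite /Phi.
case hy: (h y) => [b|]; last by case: (h (x k.+1)).
case hx1: (h (x k.+1)) => [a|]; last by have := Hstep k y; rewrite hx1 hy.
have prox := prox_three_point h _ (x k) (x k.+1) y _ a b Hhconv hx1 hy (Hstep k).
have smooth := Fsum_piag_bound x f gradf Ln tau tau_k k y Hconv Hgrad Hlip Htau.
have := congr1 (Rmult (/ (2 * alpha))) (norm_sq_three_point (x k) (x k.+1) y).
rewrite -/L [inner (piag_grad _ _ _ _) _]inner_subr in smooth.
rewrite [inner (piag_grad _ _ _ _) _]inner_subr in prox.
cbn [ele eplus]; lra.
Qed.
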